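(* Let $G$ be a finitely generated group with finite symmetric generating set $S$, and $H\subset G$ a finite index subgroup. For any subset $A\subseteq G/H$, $$\operatorname{sw}(A)\le 6+2\sum_{k=1}^{\infty}\Phi_G\!\left(\tfrac14\left(\tfrac34\right)^k|A|\right)\left(\tfrac34\right)^k|A|.$$
   Context: $G$ carries its Cayley graph structure (an edge between $g$ and $sg$, $s\in S$, $sg\ne g$) and $G/H$ its Schreier graph structure (vertices the cosets $gH$; an edge between distinct cosets $x,y$ iff $y=sx$ for some $s\in S$). For a vertex set $F$ of a graph, $\partial F$ is the set of edges from $F$ to its complement. The Folner profile of $G$ is $\Phi_G(V)=\min\{|\partial F|/|F|: F\subseteq G \text{ finite nonempty}, |F|\le\max(V,1)\}$ for $V>0$ (so $\Phi_G$ is non-increasing and $\Phi_G(V)=\Phi_G(1)$ for $V<1$). For disjoint vertex sets $B_1,B_2$, $E(B_1,B_2)$ is the set of edges between them. A sweepout of a finite vertex set $A$ is a nested sequence $\emptyset=F_0\subseteq\dots\subseteq F_{|A|}=A$ with $|F_j|=j$, of width $\max_j|E(F_j,A\setminus F_j)|$; $\operatorname{sw}(A)$ is the minimum width over all sweepouts of $A$. *)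

From HB Require Import structures.
From mathcomp Require Import all_boot all_order all_algebra.
From mathcomp Require Import all_classical all_reals all_analysis.
Set Implicit Arguments. Unset Strict Implicit. Unset Printing Implicit Defensive.
Import Order.TTheory GRing.Theory Num.Theory.
Local Open Scope ring_scope.

(* Edge boundary of a finite set F (given as a duplicate-free list) in the
   Cayley graph of (G,S): edges {g, s g} (s in S, s g <> g) with exactly one
   endpoint in F.  Each such edge is listed once, oriented as (x, s x) with
   x in F and s x not in F (then automatically s x <> x).                   *)
Definition cayley_boundary (G : groupType) (S : seq G) (F : seq G) : nat :=
  size (undup [seq (x, (s * x)%g) | x <- F,
                   s <- [seq t <- S | (t * x)%g \notin F]]).

(* Folner profile  Phi_G(V) = min { |dF|/|F| : F finite nonempty, |F| <= max(V,1) }.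
   (The minimum exists since only finitely many values occur; we take the
   infimum of the set of values, which is this minimum.)                     *)
Definition folner_profile (R : realType) (G : groupType) (S : seq G) (V : R) : R :=
  inf [set r : R | exists F : seq G,
        [/\ uniq F, F != [::], (size F)%:R <= Num.max V 1
          & r = (cayley_boundary S F)%:R / (size F)%:R]].

(* G/H is presented by a type Q together with the
   canonical projection pi : G -> Q (surjective, pi g = pi g' iff g^-1 g' in H),
   so that the coset g H is pi g.                          *)
Definition schreier_adj (G : groupType) (S : seq G) (Q : Type) (pi : G -> Q)
  (x y : Q) : Prop :=
  x <> y /\ exists g s, [/\ s \in S, pi g = x & pi (s * g)%g = y].

(* |E(B1,B2)| for disjoint B1, B2: edges with one end in B1, the other in B2,
   each counted once via its orientation from B1 to B2.                      *)
Definition edges_between (G : groupType) (S : seq G) (Q : finType) (pi : G -> Q)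
  (B1 B2 : {set Q}) : nat :=
  #|[set p : Q * Q | [&& p.1 \in B1, p.2 \in B2 & `[< schreier_adj S pi p.1 p.2 >]]]|.

Definition is_sweepout (Q : finType) (A : {set Q}) (F : nat -> {set Q}) : Prop :=
  [/\ forall j, (j <= #|A|)%N -> #|F j| = j,
      forall j, (j < #|A|)%N -> F j \subset F j.+1
    & F #|A| = A].

Definition sweep_width (G : groupType) (S : seq G) (Q : finType) (pi : G -> Q)
  (A : {set Q}) (F : nat -> {set Q}) : nat :=
  \max_(j < #|A|.+1) edges_between S pi (F j) (A :\: F j).

(* sw(A) = minimal width of a sweepout of A (the minimum exists: widths are
   natural numbers and sweepouts exist; we take the infimum, which is it).   *)
Definition sweepwidth (R : realType) (G : groupType) (S : seq G) (Q : finType)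
  (pi : G -> Q) (A : {set Q}) : R :=
  inf [set r : R | exists F : nat -> {set Q},
        is_sweepout A F /\ r = (sweep_width S pi A F)%:R].

(* Pick a Folner set F with |F| <= u/4 realising the Folner profile Phi(u/4)
   (a minimum, since the ratios |dF|/|F| take finitely many values).  For a
   coset y let f_y(x) count the g in F with g y = x.  By the co-area formula the
   cuts in A of the superlevel sets of f_y, summed over all heights, are at most
   the number of boundary edges (g, s g) of F with g y in A.  Summing over y, the
   superlevel sets have total size |F||A| and total cut at most |dF||A|, so one
   of them is a piece B with |F| |E(B, A \ B)| <= |dF| |B|.  Collecting such
   pieces greedily splits a set of size between u and 4u/3 into two parts of size
   at most u at a cost of at most Phi(u/4) u.  A sweepout of B followed by one of
   A \ B has width at most this cut plus the larger of the two widths, so cutting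
   recursively along the scales u = (3/4)^k |A| down to sets of at most 5 points
   (of width at most 6) gives the bound. *)

From HB Require Import structures.
From mathcomp Require Import all_boot all_order all_algebra.
From mathcomp Require Import all_classical all_reals all_analysis.
From mathcomp Require Import zify lra.
Import Order.TTheory GRing.Theory Num.Theory.
Set Implicit Arguments. Unset Strict Implicit.

Lemma card_disjointU (T : finType) (B C : {set T}) :
  [disjoint B & C] -> #|B :|: C| = #|B| + #|C|.
Proof. by move=> dBC; rewrite -cardsUI (disjoint_setI0 dBC) cards0 addn0. Qed.

Lemma count_sum (T : Type) (a : pred T) (s : seq T) : count a s = \sum_(x <- s) a x.
Proof. by elim: s => [|x s IHs]; rewrite ?big_nil ?big_cons //= IHs. Qed.

Lemma card_set_sum (T : finType) (P : pred T) : #|[set x | P x]| = \sum_x P x.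
Proof.
rewrite -sum1_card big_mkcond /=; apply: eq_bigr => x _.
by rewrite inE; case: (P x).
Qed.

Lemma sum_count_exchange (I : finType) (T : Type) (P : I -> pred T) (s : seq T) :
  \sum_i count (P i) s = \sum_(x <- s) #|[set i | P i x]|.
Proof.
under eq_bigr do rewrite count_sum.
by rewrite exchange_big /=; apply: eq_bigr => x _; rewrite card_set_sum.
Qed.

Lemma sum_count_eq (I : finType) (T : Type) (f : T -> I) (P : pred I) (s : seq T) :
  \sum_(i | P i) count (fun x => f x == i) s = count (fun x => P (f x)) s.
Proof.
elim: s => [|x s IHs] /=; first by rewrite big1.
rewrite big_split /= IHs; congr (_ + _).
rewrite big_mkcond (bigD1 (f x)) //= eqxx big1 ?addn0; first by case: (P (f x)).
by move=> i /negPf; rewrite eq_sym => ->; case: (P i).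
Qed.

Lemma sum_ord_between (n a b : nat) :
  \sum_(t < n) ((a <= t) && (t < b)) = minn n b - a.
Proof.
elim: n => [|n IHn]; first by rewrite big_ord0 min0n.
rewrite big_ord_recr /= IHn.
by case: (leqP a n) => an; case: (ltnP n b) => nb /=; rewrite ?addn0 ?addn1 !minnE; lia.
Qed.

Lemma sum_ord_lt (n b : nat) : \sum_(t < n) (t < b) = minn n b.
Proof. by rewrite -[RHS]subn0 -sum_ord_between. Qed.

Lemma exists_leq_weighted (I : finType) (a c : I -> nat) (b : nat) :
  \sum_i a i <= b * \sum_i c i -> (exists i, 0 < c i) ->
  exists i, 0 < c i /\ a i <= b * c i.
Proof.
move=> sum_ac [i0 ci0].
have [/existsP[i /andP[]]|/existsPn no_i] := boolP [exists i, (0 < c i) && (a i <= b * c i)].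
  by exists i.
have lt_ca i : b * c i + (0 < c i) <= a i.
  by have := no_i i; case: posnP => [->|_] /=; rewrite ?muln0 // -ltnNge addn1.
have : \sum_i (b * c i + (0 < c i)) <= b * \sum_i c i.
  by apply: leq_trans sum_ac; apply: leq_sum => i _; exact: lt_ca.
rewrite big_split /= -big_distrr /= -{2}[b * _]addn0 leq_add2l leqn0 sum_nat_eq0.
by move=> /forallP /(_ i0); rewrite ci0.
Qed.

Section SchreierEdges.
Variables (G : groupType) (S : seq G) (Q : finType) (pi : G -> Q).
Implicit Types (A B C : {set Q}).
Local Notation E := (edges_between S pi).

Lemma edges_betweenS B1 B1' B2 B2' :
  B1 \subset B1' -> B2 \subset B2' -> E B1 B2 <= E B1' B2'.
Proof.
move=> sB1 sB2; apply: subset_leq_card; apply/fintype.subsetP => p; rewrite !inE.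
by case/and3P=> /(fintype.subsetP sB1) -> /(fintype.subsetP sB2) ->.
Qed.

Lemma edges_betweenUl B1 B1' B2 : E (B1 :|: B1') B2 <= E B1 B2 + E B1' B2.
Proof.
apply: leq_trans (leq_card_setU _ _); apply: subset_leq_card.
by apply/fintype.subsetP => p; rewrite !inE; case/and3P=> /orP[]-> -> ->; rewrite ?orbT.
Qed.

Lemma edges_betweenUr B1 B2 B2' : E B1 (B2 :|: B2') <= E B1 B2 + E B1 B2'.
Proof.
apply: leq_trans (leq_card_setU _ _); apply: subset_leq_card.
by apply/fintype.subsetP => p; rewrite !inE; case/and3P=> -> /orP[]-> ->; rewrite ?orbT.
Qed.

Lemma edges_between_leq_mul B1 B2 : E B1 B2 <= #|B1| * #|B2|.
Proof.
rewrite -cardsX; apply: subset_leq_card; apply/fintype.subsetP => -[x y].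
by rewrite !inE => /and3P[-> ->].
Qed.

Definition sweepable A (w : nat) :=
  exists F, is_sweepout A F /\ sweep_width S pi A F <= w.

Lemma sweepout_subset A F i j :
  is_sweepout A F -> i <= j <= #|A| -> F i \subset F j.
Proof.
case=> _ FS _ /andP[]; elim: j => [|j IHj]; first by rewrite leqn0 => /eqP ->.
rewrite leq_eqVlt => /orP[/eqP -> //|ij] jA.
exact: fintype.subset_trans (IHj ij (ltnW jA)) (FS j jA).
Qed.

Lemma sweepout_sub A F j : is_sweepout A F -> j <= #|A| -> F j \subset A.
Proof.
move=> FA jA; have := sweepout_subset FA (introT andP (conj jA (leqnn _))).
by case: FA => _ _ ->.
Qed.

Lemma sweep_width_leq A F w :
  (forall j, j <= #|A| -> E (F j) (A :\: F j) <= w) -> sweep_width S pi A F <= w.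
Proof. by move=> Fw; apply/bigmax_leqP => j _; apply: Fw; rewrite -ltnS. Qed.

Lemma leq_sweep_width A F j : j <= #|A| -> E (F j) (A :\: F j) <= sweep_width S pi A F.
Proof.
by move=> jA; apply: (leq_bigmax_cond (Ordinal (jA : j < #|A|.+1))
  (F := fun i : 'I_#|A|.+1 => E (F i) (A :\: F i))).
Qed.

Lemma sweepout_exists A : exists F, is_sweepout A F.
Proof.
exists (fun j => [set x in take j (enum A)]).
have card_take j : j <= #|A| -> #|[set x in take j (enum A)]| = j.
  move=> jA; rewrite cardsE (card_uniqP _) ?take_uniq ?enum_uniq //.
  by rewrite size_take -cardE; case: ltngtP jA.
split=> // [j jA|]; last by apply/finset.setP => x; rewrite inE cardE take_size mem_enum.
apply/fintype.subsetP => x; rewrite !inE => xj.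
by rewrite (take_nth x) -?cats1 ?mem_cat ?xj // -cardE.
Qed.

Lemma sweepable_small A : #|A| <= 5 -> sweepable A 6.
Proof.
move=> A5; have [F FA] := sweepout_exists A; exists F; split=> //.
apply: sweep_width_leq => j jA; apply: leq_trans (edges_between_leq_mul _ _) _.
case: (FA) => cardF _ _.
rewrite cardsD (finset.setIidPr (sweepout_sub FA jA)) !cardF //.
by move: A5 jA; case: #|A| => [|[|[|[|[|[|]]]]]] //; case: j => [|[|[|[|[|[|]]]]]].
Qed.

Section Concatenation.
Variables (B C : {set Q}) (FB FC : nat -> {set Q}).
Hypotheses (dBC : [disjoint B & C]) (FBB : is_sweepout B FB) (FCC : is_sweepout C FC).

Definition sweepout_cat j := if j <= #|B| then FB j else B :|: FC (j - #|B|).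

Lemma card_setU_sweepout k : k <= #|C| -> #|B :|: FC k| = #|B| + k.
Proof.
move=> kC; case: FCC => cardFC _ _.
by rewrite card_disjointU ?cardFC // (disjointWr (sweepout_sub FCC kC) dBC).
Qed.

Lemma is_sweepout_cat : is_sweepout (B :|: C) sweepout_cat.
Proof.
case: (FBB) (FCC) => cardFB FBS FBE [cardFC FCS FCE].
rewrite /is_sweepout /sweepout_cat card_disjointU //; split => [j jBC|j jBC|].
- case: leqP => jB; first exact: cardFB.
  have jC : j - #|B| <= #|C| by rewrite leq_subLR.
  by rewrite card_setU_sweepout // subnKC //; exact: ltnW.
- case: (ltngtP j #|B|) => jB; first exact: FBS.
    rewrite subSn; last exact: ltnW.
    by apply/finset.setUS/FCS; rewrite ltn_subLR //; exact: ltnW.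
  by rewrite jB FBE finset.subsetUl.
- case: leqP => [|_]; last by rewrite addKn FCE.
  rewrite -{2}[#|B|]addn0 leq_add2l leqn0 cards_eq0 => /eqP C0.
  by rewrite C0 cards0 addn0 finset.setU0 FBE.
Qed.

Lemma sweep_width_cat : sweep_width S pi (B :|: C) sweepout_cat <=
  E B C + maxn (sweep_width S pi B FB) (sweep_width S pi C FC).
Proof.
apply: sweep_width_leq => j; rewrite card_disjointU // /sweepout_cat => jBC.
case: (leqP j #|B|) => jB.
  have sub : (B :|: C) :\: FB j \subset (B :\: FB j) :|: C.
    by apply/fintype.subsetP => x; rewrite !inE; case/andP=> -> /orP[] ->; rewrite ?orbT.
  apply: leq_trans (edges_betweenS (subxx _) sub) _.
  apply: leq_trans (edges_betweenUr _ _ _) _; rewrite addnC leq_add //.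
    exact: edges_betweenS (sweepout_sub FBB jB) (subxx _).
  exact: leq_trans (leq_sweep_width _ jB) (leq_maxl _ _).
have jC : j - #|B| <= #|C| by rewrite leq_subLR.
have sub : (B :|: C) :\: (B :|: FC (j - #|B|)) \subset C :\: FC (j - #|B|).
  by apply/fintype.subsetP => x; rewrite !inE negb_or => /andP[/andP[/negPf -> ->]].
apply: leq_trans (edges_betweenS (subxx _) sub) _.
apply: leq_trans (edges_betweenUl _ _ _) _; rewrite leq_add //.
  exact: edges_betweenS (subxx _) (subsetDl _ _).
exact: leq_trans (leq_sweep_width _ jC) (leq_maxr _ _).
Qed.

End Concatenation.

Lemma sweepable_setU B C wB wC : [disjoint B & C] ->
  sweepable B wB -> sweepable C wC -> sweepable (B :|: C) (E B C + maxn wB wC).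
Proof.
move=> dBC [FB [FBB wFB]] [FC [FCC wFC]]; exists (sweepout_cat B FB FC); split.
  exact: is_sweepout_cat.
apply: leq_trans (sweep_width_cat FC dBC FBB) _.
by rewrite leq_add2l geq_max !leq_max wFB wFC orbT.
Qed.

End SchreierEdges.

Definition boundary_edges (G : groupType) (S : seq G) (F : seq G) : seq (G * G) :=
  undup [seq (x, (s * x)%g) | x <- F, s <- [seq t <- S | (t * x)%g \notin F]].

Section CosetAction.
Variables (G : groupType) (S : seq G) (H : {pred G}) (Q : finType) (pi : G -> Q).
Hypothesis pi_surj : forall x : Q, exists g, pi g = x.
Hypothesis pi_coset : forall g g' : G, pi g = pi g' <-> (g^-1 * g')%g \in H.
Implicit Types (A B : {set Q}) (F : seq G).
Local Notation E := (edges_between S pi).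

Definition coset_rep (x : Q) : G := sval (cid (pi_surj x)).

Lemma coset_repK x : pi (coset_rep x) = x.
Proof. by rewrite /coset_rep; case: cid. Qed.

(* The action g (h H) = (g h) H of G on G/H; [pi_coset] makes it independent
   of the chosen representative. *)
Definition act (g : G) (x : Q) : Q := pi (g * coset_rep x)%g.

Lemma act_pi g h : act g (pi h) = pi (g * h)%g.
Proof.
apply/pi_coset; have /pi_coset := coset_repK (pi h).
by rewrite invgM -mulgA (mulgA g^-1%g) mulVg mul1g.
Qed.

Lemma actM g h x : act (g * h)%g x = act g (act h x).
Proof. by rewrite [act h x]/act act_pi mulgA. Qed.

Lemma act1 x : act 1%g x = x.
Proof. by rewrite /act mul1g coset_repK. Qed.

Lemma actK g : cancel (act g) (act g^-1%g).
Proof. by move=> x; rewrite -actM mulVg act1. Qed.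

Lemma schreier_adjE x y :
  schreier_adj S pi x y <-> x <> y /\ exists2 s, s \in S & act s x = y.
Proof.
split=> [[xy [g [s [sS gx sgy]]]]|[xy [s sS sxy]]].
  by split=> //; exists s; rewrite // -gx act_pi.
by split=> //; exists (coset_rep x), s; rewrite coset_repK.
Qed.

Lemma card_preimset_act g A : #|[set y | act g y \in A]| = #|A|.
Proof.
have -> : [set y | act g y \in A] = act g^-1%g @: A.
  apply/finset.setP => y; rewrite inE; apply/idP/imsetP => [gyA|[x xA ->]].
    by exists (act g y); rewrite ?actK.
  by rewrite -actM mulgV act1.
exact: card_imset (can_inj (actK g^-1%g)).
Qed.

Lemma sum_count_act (T : Type) (s : seq T) (z : T -> G) A :
  \sum_y count (fun w => act (z w) y \in A) s = size s * #|A|.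
Proof.
rewrite (sum_count_exchange (fun y w => act (z w) y \in A)).
under eq_bigr do rewrite card_preimset_act.
by rewrite big_const_seq iter_addn_0 mulnC.
Qed.

Definition adjacent_in A (p : Q * Q) :=
  [&& p.1 \in A, p.2 \in A & `[< schreier_adj S pi p.1 p.2 >]].

Section Superlevel.
Variables (F : seq G) (y : Q).

Definition fiber_size (x : Q) := count (fun g => act g y == x) F.

Lemma fiber_size_leq x : fiber_size x <= size F.
Proof. exact: count_size. Qed.

Definition superlevel A t := [set x in A | t < fiber_size x].

Lemma card_superlevel_leq A t : #|superlevel A t| <= size F.
Proof.
apply: leq_trans (_ : _ <= #|[seq act g y | g <- F]|) _; last first.
  by rewrite -(size_map (act^~ y)) card_size.
apply/subset_leq_card/fintype.subsetP => x; rewrite inE => /andP[_].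
by move=> /(leq_ltn_trans (leq0n t)); rewrite -has_count => /hasP[g gF /eqP <-]; exact: map_f.
Qed.

Lemma sum_card_superlevel A :
  \sum_(t < size F) #|superlevel A t| = count (fun g => act g y \in A) F.
Proof.
transitivity (\sum_(x in A) fiber_size x); last by rewrite /fiber_size sum_count_eq.
under [LHS]eq_bigr => t _ do rewrite /superlevel card_set_sum.
rewrite exchange_big [RHS]big_mkcond /=; apply: eq_bigr => x _.
rewrite -[in RHS](minn_idPr (fiber_size_leq x)) -sum_ord_lt.
by case: ifP => xA; [apply: eq_bigr | rewrite big1] => // t _; rewrite xA.
Qed.

(* Co-area formula: an edge (x, z) crosses the cut at height t exactly when
   fiber_size z <= t < fiber_size x. *)
Lemma sum_edges_superlevel A : \sum_(t < size F) E (superlevel A t) (A :\: superlevel A t) =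
  \sum_(p | adjacent_in A p) (fiber_size p.1 - fiber_size p.2).
Proof.
under [LHS]eq_bigr do rewrite /edges_between card_set_sum.
rewrite exchange_big [RHS]big_mkcond /=; apply: eq_bigr => p _.
case adj_p: (adjacent_in A p); last first.
  rewrite big1 // => t _; move: adj_p; rewrite /adjacent_in !inE.
  by case: (p.1 \in A); case: (p.2 \in A); case: `[< _ >]; rewrite /= ?andbF.
move: adj_p => /and3P[p1A p2A adj].
rewrite -(minn_idPr (fiber_size_leq p.1)) -sum_ord_between; apply: eq_bigr => t _.
by rewrite !inE p1A p2A adj /= !andbT andbC -leqNgt.
Qed.

Hypothesis uF : uniq F.

Lemma fiber_size_sub_leq_exits s x z : act s x = z ->
  fiber_size x - fiber_size z <= count (fun g => (act g y == x) && ((s * g)%g \notin F)) F.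
Proof.
move=> sxz.
have split_mult : fiber_size x = count (fun g => (act g y == x) && ((s * g)%g \in F)) F
    + count (fun g => (act g y == x) && ((s * g)%g \notin F)) F.
  rewrite /fiber_size -size_filter -(count_predC (fun g => (s * g)%g \in F)) !count_filter.
  by congr (_ + _); apply: eq_count => g /=; rewrite andbC.
suff : count (fun g => (act g y == x) && ((s * g)%g \in F)) F <= fiber_size z.
  by rewrite split_mult; lia.
rewrite /fiber_size -!size_filter -(size_map (fun g => (s * g)%g)).
apply: uniq_leq_size; first by rewrite map_inj_uniq ?filter_uniq //; exact: mulgI.
move=> h /mapP[g]; rewrite mem_filter => /andP[/andP[/eqP gyx sgF] _] ->.
by rewrite mem_filter sgF actM gyx sxz eqxx.
Qed.

Definition edge_image (q : G * G) : Q * Q := (act q.1 y, act q.2 y).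

Lemma count_exits_leq p s : s \in S -> act s p.1 = p.2 ->
  count (fun g => (act g y == p.1) && ((s * g)%g \notin F)) F <=
  count (fun q => edge_image q == p) (boundary_edges S F).
Proof.
move=> sS sp; rewrite -!size_filter -(size_map (fun g => (g, s * g)%g)).
apply: uniq_leq_size.
  by rewrite map_inj_uniq ?filter_uniq // => g h [].
move=> h /mapP[g]; rewrite mem_filter => /andP[/andP[/eqP gyp sgF] gF] ->.
rewrite mem_filter /edge_image /= actM gyp sp -surjective_pairing eqxx /=.
by rewrite mem_undup; apply/allpairsPdep; exists g, s; rewrite mem_filter sgF sS.
Qed.

Lemma sum_edges_superlevel_leq A :
  \sum_(t < size F) E (superlevel A t) (A :\: superlevel A t) <=
  count (fun q => act q.1 y \in A) (boundary_edges S F).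
Proof.
rewrite sum_edges_superlevel.
apply: (@leq_trans (\sum_(p | adjacent_in A p)
    count (fun q => edge_image q == p) (boundary_edges S F))).
  apply: leq_sum => p /and3P[_ _ /asboolP /schreier_adjE[_ [s sS sp]]].
  exact: leq_trans (fiber_size_sub_leq_exits sp) (count_exits_leq sS sp).
by rewrite sum_count_eq; apply: sub_count => q /and3P[].
Qed.

End Superlevel.

Lemma exists_sparse_piece F A : uniq F -> 0 < size F -> 0 < #|A| ->
  exists B, [/\ B \subset A, 0 < #|B|, #|B| <= size F &
    size F * E B (A :\: B) <= cayley_boundary S F * #|B|].
Proof.
move=> uF F0 A0; set f := size F; set b := cayley_boundary S F.
pose L (i : Q * 'I_f) := superlevel F i.1 A i.2.
have sum_card : \sum_i #|L i| = f * #|A|.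
  rewrite -(pair_big xpredT xpredT (fun y (t : 'I_f) => #|superlevel F y A t|)) /=.
  under eq_bigr do rewrite sum_card_superlevel.
  exact: (sum_count_act F id).
have sum_edges : \sum_i f * E (L i) (A :\: L i) <= b * \sum_i #|L i|.
  rewrite sum_card mulnCA -big_distrr leq_mul2l /=; apply/orP; right.
  rewrite -(pair_big xpredT xpredT
    (fun y (t : 'I_f) => E (superlevel F y A t) (A :\: superlevel F y A t))) /=.
  rewrite -(sum_count_act (boundary_edges S F) fst).
  by apply: leq_sum => y _; exact: sum_edges_superlevel_leq.
have [i [Li_gt0 Li_sparse]] : exists i, 0 < #|L i| /\ f * E (L i) (A :\: L i) <= b * #|L i|.
  apply: exists_leq_weighted sum_edges _.
  have : \sum_i #|L i| != 0 by rewrite sum_card muln_eq0 negb_or -!lt0n F0.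
  by rewrite sum_nat_eq0 => /forallPn[i]; rewrite -lt0n; exists i.
exists (L i); split => //; last exact: card_superlevel_leq.
by apply/fintype.subsetP => x; rewrite inE => /andP[].
Qed.

Lemma exists_sparse_subset F : uniq F -> 0 < size F -> forall T A, T <= #|A| ->
  exists B, [/\ B \subset A, T <= #|B|, #|B| < T + size F &
    size F * E B (A :\: B) <= cayley_boundary S F * #|B|].
Proof.
move=> uF F0 T; elim/ltn_ind: T => T IHT A TA.
have [T0|T_gt0] := posnP T.
  exists finset.set0; rewrite cards0 T0 muln0; split => //; first exact: finset.sub0set.
  have := edges_between_leq_mul S pi finset.set0 (A :\: finset.set0).
  by rewrite cards0 mul0n leqn0 => /eqP ->; rewrite muln0.
have [B1 [B1A B1_gt0 B1F B1_sparse]] := exists_sparse_piece uF F0 (leq_trans T_gt0 TA).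
have [TB1|B1T] := leqP T #|B1|; first by exists B1; split => //; lia.
have cardAB1 : #|A :\: B1| = #|A| - #|B1| by rewrite cardsD (finset.setIidPr B1A).
have T1 : T - #|B1| < T by rewrite ltn_subrL B1_gt0.
have T1A : T - #|B1| <= #|A :\: B1| by rewrite cardAB1 leq_sub2r.
have [B2 [B2AB1 B2T B2F B2_sparse]] := IHT _ T1 _ T1A.
have dB12 : [disjoint B1 & B2].
  rewrite disjoint_sym disjoint_subset; apply: fintype.subset_trans B2AB1 _.
  by apply/fintype.subsetP => x; rewrite !inE => /andP[].
exists (B1 :|: B2); rewrite card_disjointU //; split; [|lia|lia|].
- by rewrite finset.subUset B1A (fintype.subset_trans B2AB1) ?finset.subsetDl.
rewrite mulnDr; apply: leq_trans (leq_add B1_sparse B2_sparse).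
rewrite -mulnDr leq_mul2l; apply/orP; right.
apply: leq_trans (edges_betweenUl _ _ _ _ _) (leq_add _ _).
  by apply: edges_betweenS; rewrite // finset.setDS // finset.subsetUl.
by rewrite finset.setDDl.
Qed.

End CosetAction.

Local Open Scope ring_scope.

Section FiniteInf.
Variable R : realType.
Local Open Scope classical_set_scope.
Implicit Types (X : set R) (s : seq R).

Lemma exists_min_seq X s : X !=set0 -> X `<=` [set x | x \in s] ->
  exists2 m, X m & lbound X m.
Proof.
elim: s X => [|a s IHs] X [x Xx] Xs; first by have := Xs x Xx.
have [[y [Xy ya]]|] := pselect (exists y, X y /\ y != a); last first.
  move=> /forallNP Xa; have onlya y : X y -> y = a.
    by move=> Xy; have [//|ya] := eqVneq y a; case: (Xa y).
  by exists a => [|y /onlya ->]; rewrite -?(onlya x Xx).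
have X'0 : [set y | X y /\ y != a] !=set0 by exists y.
have X's : [set y | X y /\ y != a] `<=` [set x | x \in s].
  by move=> z [Xz za]; have := Xs z Xz; rewrite /= inE (negPf za).
have [m [Xm ma] mX] := IHs _ X'0 X's.
have [Xa|nXa] := pselect (X a).
  exists (Num.min a m) => [|z Xz]; first by case: leP.
  rewrite ge_min; have [-> | za] := eqVneq z a; first by rewrite lexx.
  by rewrite mX ?orbT.
by exists m => // z Xz; apply: mX; split => //; apply/eqP => za; apply: nXa; rewrite -za.
Qed.

Lemma inf_mem_seq X s : X !=set0 -> X `<=` [set x | x \in s] -> X (inf X).
Proof.
move=> X0 Xs; have [m Xm mX] := exists_min_seq X0 Xs.
suff -> : inf X = m by [].
by apply/le_anti; rewrite (ge_inf _ Xm) ?(lb_le_inf X0) //; exists m.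
Qed.

End FiniteInf.

Lemma cayley_boundary_leq (G : groupType) (S F : seq G) :
  (cayley_boundary S F <= size F * size S)%N.
Proof.
apply: leq_trans (size_undup _) _; rewrite size_allpairs_dep sumnE big_map.
apply: (@leq_trans (\sum_(x <- F) size S)).
  by apply: leq_sum => x _; rewrite size_filter count_size.
by rewrite big_const_seq iter_addn_0 mulnC count_predT.
Qed.

Section FolnerProfile.
Variables (R : realType) (G : groupType) (S : seq G).

Lemma folner_profile_attained (V : R) : exists F, [/\ uniq F, (0 < size F)%N,
  (size F)%:R <= Num.max V 1 & folner_profile S V = (cayley_boundary S F)%:R / (size F)%:R].
Proof.
rewrite /folner_profile; set X := (Y in inf Y).
set M := Num.truncn (Num.max V 1).
pose ratios := [seq p%:R / q%:R : R | q <- iota 0 M.+1, p <- iota 0 (M * size S).+1].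
have X0 : (X !=set0)%classic.
  by exists ((cayley_boundary S [:: 1%g])%:R / 1%:R), [:: 1%g]; rewrite /= le_max lexx orbT.
have Xratios : (X `<=` [set r | r \in ratios])%classic.
  move=> _ [F [_ _ FV ->]].
  have FM : (size F <= M)%N by rewrite truncn_ge_nat // le_max ler01 orbT.
  apply: (allpairs_f (fun q p : nat => p%:R / q%:R : R)); rewrite mem_iota ltnS //=.
  by apply: leq_trans (cayley_boundary_leq S F) _; rewrite leq_mul2r FM orbT.
have [F [uF FN0 FV ->]] := inf_mem_seq X0 Xratios.
by exists F; split; rewrite // lt0n size_eq0.
Qed.

Lemma folner_profile_ge0 (V : R) : 0 <= folner_profile S V.
Proof. by have [F [_ _ _ ->]] := folner_profile_attained V; rewrite divr_ge0. Qed.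

End FolnerProfile.

Section Recursion.
Variables (R : realType) (G : groupType) (S : seq G) (H : {pred G}).
Variables (Q : finType) (pi : G -> Q).
Hypothesis pi_surj : forall x : Q, exists g, pi g = x.
Hypothesis pi_coset : forall g g' : G, pi g = pi g' <-> (g^-1 * g')%g \in H.
Implicit Types (A B : {set Q}).
Local Notation E := (edges_between S pi).

(* Collect greedily at least T := |A| - floor u points, so that |A \ B| <= u;
   the overshoot is less than |F| <= u/4, so |B| < 4u/3 - (u - 1) + u/4 <= u. *)
Lemma balanced_cut (u : R) A : 4 <= u -> u < #|A|%:R -> 3 * #|A|%:R <= 4 * u ->
  exists B, [/\ B \subset A, #|B|%:R <= u, #|A :\: B|%:R <= u &
    (E B (A :\: B))%:R <= folner_profile S (4^-1 * u) * u].
Proof.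
move=> u4 uA Au.
have [F [uF F0 FV Fphi]] := folner_profile_attained S (4^-1 * u).
have {FV} Fu : (size F)%:R <= 4^-1 * u by move: FV; rewrite max_l //; lra.
have /andP[qu uq] : (Num.truncn u)%:R <= u < (Num.truncn u).+1%:R.
  by apply: truncn_itv; lra.
set q := Num.truncn u in qu uq.
have qA : (q <= #|A|)%N by rewrite -(ler_nat R); lra.
have [B [BA qB Bq Bsparse]] :=
  exists_sparse_subset S pi_surj pi_coset uF F0 (leq_subr q #|A|).
have cardAB : #|A :\: B| = (#|A| - #|B|)%N by rewrite cardsD (finset.setIidPr BA).
have Bu : #|B|%:R <= u.
  move: Bq; rewrite -(ltn_add2r q) addnAC subnK // -(ltr_nat R) !natrD; lra.
exists B; split => //; first by apply: le_trans qu; rewrite cardAB ler_nat leq_subCl.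
have f0 : (size F)%:R != 0 :> R by rewrite pnatr_eq0 -lt0n.
rewrite -(ler_pM2l (_ : 0 < (size F)%:R)) ?ltr0n // Fphi mulrCA mulrA divfK //.
apply: le_trans (_ : _ <= (cayley_boundary S F)%:R * #|B|%:R) _.
  by rewrite -!natrM ler_nat.
by rewrite ler_wpM2l.
Qed.

Lemma sweepwidth_leq A w : sweepable S pi A w -> sweepwidth R S pi A <= w%:R.
Proof.
move=> [F [FA Fw]]; apply: le_trans (_ : _ <= (sweep_width S pi A F)%:R) _.
  by apply: ge_inf; [exists 0 => _ [F' [_ ->]] | exists F].
by rewrite ler_nat.
Qed.

Variable n : nat.

Definition scale (k : nat) : R := (3 / 4) ^+ k * n%:R.

Definition cut_cost (k : nat) : R := folner_profile S (4^-1 * scale k) * scale k.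

Lemma scale_ge0 k : 0 <= scale k.
Proof. by rewrite mulr_ge0 ?exprn_ge0 ?ler0n //; lra. Qed.

Lemma scaleS k : scale k.+1 = 3 / 4 * scale k.
Proof. by rewrite /scale exprS mulrA. Qed.

Lemma cut_cost_ge0 k : 0 <= cut_cost k.
Proof. by rewrite mulr_ge0 ?folner_profile_ge0 ?scale_ge0. Qed.

Lemma scale_n_le3 : scale n <= 3.
Proof.
have : (n * 3 ^ n <= 3 * 4 ^ n)%N.
  elim: n => // m IHm.
  have : (3 ^ m <= 4 ^ m)%N by elim: m {IHm} => // m IH; rewrite !expnS leq_mul.
  rewrite !expnS; nia.
rewrite -(ler_nat R) !natrM !natrX => h.
rewrite /scale expr_div_n mulrAC ler_pdivrMr ?exprn_gt0 //; nra.
Qed.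

Lemma sweepable_scale d k A : (k + d)%N = n -> #|A|%:R <= scale k ->
  exists2 w, sweepable S pi A w & w%:R <= 6 + \sum_(k.+1 <= j < n.+1) cut_cost j.
Proof.
have small k' A' : (#|A'| <= 5)%N ->
    exists2 w, sweepable S pi A' w & w%:R <= 6 + \sum_(k'.+1 <= j < n.+1) cut_cost j.
  move=> A5; exists 6%N; first exact: sweepable_small.
  by rewrite lerDl; apply: sumr_ge0 => j _; exact: cut_cost_ge0.
elim: d k A => [|d IHd] k A kdn Ak.
  apply: small; rewrite addn0 in kdn; subst k.
  by have := le_trans Ak scale_n_le3; rewrite (ler_nat R _ 3); lia.
have [/small//|A6] := leqP #|A| 5.
have sum_split : \sum_(k.+1 <= j < n.+1) cut_cost j =
    cut_cost k.+1 + \sum_(k.+2 <= j < n.+1) cut_cost j by rewrite big_ltn //; lia.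
have cost1_ge0 := cut_cost_ge0 k.+1.
have kdn1 : (k.+1 + d)%N = n by rewrite addSnnS.
have [Ak1|Ak1] := lerP #|A|%:R (scale k.+1).
  by have [w Aw wle] := IHd _ _ kdn1 Ak1; exists w => //; lra.
have A6r : 6 <= #|A|%:R :> R by rewrite (ler_nat R 6).
have u4 : 4 <= scale k.+1 by rewrite scaleS; lra.
have Au : 3 * #|A|%:R <= 4 * scale k.+1 by rewrite scaleS; lra.
have [B [BA Bk1 ABk1 cutE]] := balanced_cut u4 Ak1 Au.
have [wB Bw wBle] := IHd _ _ kdn1 Bk1.
have [wC Cw wCle] := IHd _ _ kdn1 ABk1.
have dB : [disjoint B & A :\: B].
  by rewrite disjoint_sym finset.disjoints_subset finset.setDE finset.subsetIr.
have AB : B :|: A :\: B = A by rewrite -{2}(finset.setID A B) (finset.setIidPr BA).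
have := sweepable_setU dB Bw Cw; rewrite AB => Aw.
exists (E B (A :\: B) + maxn wB wC)%N => //.
have : (maxn wB wC)%:R <= 6 + \sum_(k.+2 <= j < n.+1) cut_cost j by rewrite /maxn; case: ifP.
have cut_le : (E B (A :\: B))%:R <= cut_cost k.+1 := cutE.
rewrite natrD sum_split; lra.
Qed.

End Recursion.

Unset Implicit Arguments.

Theorem theorem2p6 (R : realType) (G : groupType) (S : seq G)
  (hS_symm : forall s, s \in S -> (s^-1)%g \in S)
  (hS_gen : forall g : G, exists l : seq G,
      all (fun s => s \in S) l /\ g = (\prod_(s <- l) s)%g)
  (H : {pred G}) (hH : group_closed H)
  (Q : finType) (pi : G -> Q)
  (hpi_surj : forall x : Q, exists g, pi g = x)
  (hpi_coset : forall g g' : G, pi g = pi g' <-> (g^-1 * g')%g \in H)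
  (A : {set Q}) :
  ((sweepwidth R S pi A)%:E <=
    6%:E + 2%:E * \sum_(1 <= k <oo)
      (folner_profile S (4^-1 * (3 / 4) ^+ k * #|A|%:R) * ((3 / 4) ^+ k * #|A|%:R))%:E)%E.
Proof.
set n := #|A|; set cost := cut_cost R S n.
have A_scale0 : n%:R <= scale R n 0 by rewrite /scale expr0 mul1r.
have [w Aw w_le] := sweepable_scale S hpi_surj hpi_coset (add0n n) A_scale0.
have partial_ge0 : 0 <= \sum_(1 <= j < n.+1) cost j.
  by apply: sumr_ge0 => j _; exact: cut_cost_ge0.
have -> : (\sum_(1 <= k <oo)
    (folner_profile S (4^-1 * (3 / 4) ^+ k * n%:R) * ((3 / 4) ^+ k * n%:R))%:E =
    \sum_(1 <= k <oo) (cost k)%:E)%E.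
  by apply: eq_eseriesr => k _; rewrite /cost /cut_cost /scale mulrA.
apply: (@le_trans _ _ (6 + 2 * \sum_(1 <= j < n.+1) cost j)%:E).
  by rewrite lee_fin; apply: le_trans (sweepwidth_leq R Aw) _; lra.
rewrite EFinD EFinM leeD2l //; apply: lee_wpmul2l; first by rewrite lee_fin.
rewrite -sumEFin.
by apply: nneseries_lim_ge => k _ _; rewrite lee_fin cut_cost_ge0.
Qed.
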